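(* There exist constants $0<a<b<+\infty$ such that, for the triangle Markov chain $(\mathcal T(n))_{n\in\mathbb N}$ obtained by iterated random barycentric subdivision from any initial triangle, with $J_n=J(\mathcal T(n))$, one has for all $n\in\mathbb N$ $$aJ_n\le J_{n+1}\le bJ_n .$$
   Context: A triangle is given by three points of the plane which are not all equal. Barycentric subdivision: if a triangle has vertices $A,B,C$, let $D,E,F$ be the midpoints of $[A,B],[B,C],[C,A]$ and $G$ its barycenter; the medians cut it into the six triangles $\{A,D,G\},\{D,B,G\},\{B,E,G\},\{E,C,G\},\{C,F,G\},\{F,A,G\}$. The triangle Markov chain: $\mathcal T(0)$ is given and $\mathcal T(n+1)$ is chosen uniformly among the six triangles of the barycentric subdivision of $\mathcal T(n)$, independently of the past. For a triangle $\mathcal T$, $J(\mathcal T)\in(0,+\infty]$ is the sum of the squares of the lengths of its edges divided by its area ($J=+\infty$ for zero-area triangles, with the convention $c\cdot(+\infty)=+\infty$ for $c>0$). *)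

From HB Require Import structures.
From mathcomp Require Import all_boot all_order all_algebra.
From mathcomp Require Import reals constructive_ereal.
Set Implicit Arguments. Unset Strict Implicit. Unset Printing Implicit Defensive.
Import Order.TTheory GRing.Theory Num.Theory.
Local Open Scope ring_scope.

Section Tri.
Variable R : realType.

Definition point := (R * R)%type.
Definition triangle := (point * point * point)%type.

Definition tA (T : triangle) : point := T.1.1.
Definition tB (T : triangle) : point := T.1.2.
Definition tC (T : triangle) : point := T.2.

Definition nondegenerate_triple (T : triangle) : Prop :=
  ~ (tA T = tB T /\ tB T = tC T).

Definition midpoint (P Q : point) : point :=
  ((P.1 + Q.1) / 2, (P.2 + Q.2) / 2).

Definition barycenter (T : triangle) : point :=
  (((tA T).1 + (tB T).1 + (tC T).1) / 3, ((tA T).2 + (tB T).2 + (tC T).2) / 3).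

Definition sqdist (P Q : point) : R := (P.1 - Q.1) ^+ 2 + (P.2 - Q.2) ^+ 2.

Definition area (T : triangle) : R :=
  `|((tB T).1 - (tA T).1) * ((tC T).2 - (tA T).2)
    - ((tC T).1 - (tA T).1) * ((tB T).2 - (tA T).2)| / 2.

Definition J (T : triangle) : \bar R :=
  if area T == 0 then +oo%E
  else ((sqdist (tA T) (tB T) + sqdist (tB T) (tC T) + sqdist (tC T) (tA T))
        / area T)%:E.

(* the six triangles of the barycentric subdivision, in the paper's order:
   {A,D,G},{D,B,G},{B,E,G},{E,C,G},{C,F,G},{F,A,G}, with D,E,F the midpoints
   of [A,B],[B,C],[C,A] and G the barycenter *)
Definition subtri (T : triangle) (i : 'I_6) : triangle :=
  let A := tA T in let B := tB T in let C := tC T in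
  let D := midpoint A B in let E := midpoint B C in let F := midpoint C A in
  let G := barycenter T in
  match val i with
  | 0 => (A, D, G)
  | 1 => (D, B, G)
  | 2 => (B, E, G)
  | 3 => (E, C, G)
  | 4 => (C, F, G)
  | _ => (F, A, G)
  end.

(* trajectory of the triangle Markov chain: T(0) = T0 and
   T(n+1) = subtri (T(n)) (c n), where c n is the (uniform, i.i.d.) choice *)
Fixpoint chain (T0 : triangle) (c : nat -> 'I_6) (n : nat) : triangle :=
  match n with
  | 0 => T0
  | n'.+1 => subtri (chain T0 c n') (c n')
  end.

End Tri.

From mathcomp Require Import all_boot all_order all_algebra.
From mathcomp Require Import reals constructive_ereal.
From mathcomp Require Import ring lra.
Import Order.TTheory GRing.Theory Num.Theory.
Local Open Scope ring_scope.

(* Every triangle of the barycentric subdivision has exactly one sixth of the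
   area of its parent, while the sum of the squared edge lengths changes by a
   factor in [1/24, 2/3]: per coordinate it is a quadratic form in the edge
   vectors, and both bounds reduce to the positivity of explicit binary
   quadratic forms.  Hence J changes by a factor in [1/4, 4] at each step. *)

Section Subdivision.
Variable R : realType.

Lemma quadratic_form_ge0 (al be ga u v x : R) :
  0 < al -> be ^+ 2 <= 4 * al * ga ->
  x = al * u ^+ 2 + be * u * v + ga * v ^+ 2 -> 0 <= x.
Proof.
move=> al_gt0 discr_le ->.
have completed_square : 4 * al * (al * u ^+ 2 + be * u * v + ga * v ^+ 2) =
    (2 * al * u + be * v) ^+ 2 + (4 * al * ga - be ^+ 2) * v ^+ 2 by ring.
rewrite -(pmulr_rge0 _ (_ : 0 < 4 * al)) ?mulr_gt0 // completed_square.
by rewrite addr_ge0 ?sqr_ge0 // mulr_ge0 ?sqr_ge0 ?subr_ge0.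
Qed.

Definition sqdiff_sum (a b c : R) : R := (a - b) ^+ 2 + (b - c) ^+ 2 + (c - a) ^+ 2.

(* The other five subtriangles reduce to the corner {A, D, G} by permuting the
   vertices, so [s0] and [s] are only required to agree up to such a permutation. *)
Lemma sqdiff_sum_corner_bounds (a b c s0 s : R) :
  s0 = sqdiff_sum a b c -> s = sqdiff_sum a ((a + b) / 2) ((a + b + c) / 3) ->
  s0 / 4 <= 6 * s <= 4 * s0.
Proof.
move=> -> ->; apply/andP; split; rewrite -subr_ge0.
- apply: (@quadratic_form_ge0 (11 / 6) (7 / 6) (5 / 6) (b - a) (c - a));
    [lra | lra | by rewrite /sqdiff_sum; field].
- apply: (@quadratic_form_ge0 (17 / 3) (- (26 / 3)) (20 / 3) (b - a) (c - a));
    [lra | lra | by rewrite /sqdiff_sum; field].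
Qed.

Definition coord_sqdiff_sum (k : point R -> R) (T : triangle R) : R :=
  sqdiff_sum (k (tA T)) (k (tB T)) (k (tC T)).

Lemma coord_sqdiff_sum_subtri (k : point R -> R) (T : triangle R) (i : 'I_6) :
  (forall P Q, k (midpoint P Q) = (k P + k Q) / 2) ->
  k (barycenter T) = (k (tA T) + k (tB T) + k (tC T)) / 3 ->
  coord_sqdiff_sum k T / 4 <= 6 * coord_sqdiff_sum k (subtri T i)
    <= 4 * coord_sqdiff_sum k T.
Proof.
move=> k_mid k_bar; rewrite /coord_sqdiff_sum /subtri /tA /tB /tC /= in k_bar *.
case: i => -[|[|[|[|[|[|m]]]]]] i_lt6 //=; rewrite ?k_mid k_bar;
  move: (k T.1.1) (k T.1.2) (k T.2) => a b c.
- by apply: (sqdiff_sum_corner_bounds a b c); rewrite /sqdiff_sum; ring.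
- by apply: (sqdiff_sum_corner_bounds b a c); rewrite /sqdiff_sum; ring.
- by apply: (sqdiff_sum_corner_bounds b c a); rewrite /sqdiff_sum; ring.
- by apply: (sqdiff_sum_corner_bounds c b a); rewrite /sqdiff_sum; ring.
- by apply: (sqdiff_sum_corner_bounds c a b); rewrite /sqdiff_sum; ring.
- by apply: (sqdiff_sum_corner_bounds a c b); rewrite /sqdiff_sum; ring.
Qed.

Definition edge_sqsum (T : triangle R) : R :=
  sqdist (tA T) (tB T) + sqdist (tB T) (tC T) + sqdist (tC T) (tA T).

Lemma edge_sqsumE (T : triangle R) :
  edge_sqsum T = coord_sqdiff_sum fst T + coord_sqdiff_sum snd T.
Proof. by rewrite /edge_sqsum /coord_sqdiff_sum /sqdiff_sum /sqdist; ring. Qed.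

Lemma edge_sqsum_subtri (T : triangle R) (i : 'I_6) :
  edge_sqsum T / 4 <= 6 * edge_sqsum (subtri T i) <= 4 * edge_sqsum T.
Proof.
have /andP[x_lo x_hi] := @coord_sqdiff_sum_subtri fst T i (fun _ _ => erefl) erefl.
have /andP[y_lo y_hi] := @coord_sqdiff_sum_subtri snd T i (fun _ _ => erefl) erefl.
by rewrite !edge_sqsumE; apply/andP; split; lra.
Qed.

Lemma area_subtri (T : triangle R) (i : 'I_6) : area (subtri T i) = area T / 6.
Proof.
have norm_div6 (x d : R) : x = d / 6 -> `|x| / 2 = `|d| / 2 / 6.
  by move=> ->; rewrite normrM normfV (ger0_norm (_ : (0 : R) <= 6)) // mulrAC.
case: T => [[[a1 a2] [b1 b2]] [c1 c2]].
rewrite /area /subtri /tA /tB /tC /midpoint /barycenter /=.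
by case: i => -[|[|[|[|[|[|m]]]]]] i_lt6 //=; apply: norm_div6; field.
Qed.

Lemma J_subtri_bounds (T : triangle R) (i : 'I_6) :
  ((4^-1)%:E * J T <= J (subtri T i))%E /\ (J (subtri T i) <= 4%:E * J T)%E.
Proof.
rewrite /J -/(edge_sqsum T) -/(edge_sqsum (subtri T i)) area_subtri.
have [area0 | area_neq0] := eqVneq (area T) 0.
  rewrite area0 mul0r eqxx; split; first exact: leey.
  by rewrite muleC gt0_mulye ?lte_fin.
have area_gt0 : 0 < area T by rewrite lt_neqAle eq_sym area_neq0 divr_ge0.
rewrite mulf_eq0 invr_eq0 pnatr_eq0 (negbTE area_neq0) /=.
have -> : edge_sqsum (subtri T i) / (area T / 6) = 6 * edge_sqsum (subtri T i) / area T
  by field.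
have /andP[lo hi] := edge_sqsum_subtri T i.
by split; rewrite -EFinM lee_fin mulrA ler_pM2r ?invr_gt0 //; lra.
Qed.

End Subdivision.

Theorem lemma6 (R : realType) :
  exists a b : R, 0 < a /\ a < b /\
    forall (T0 : triangle R) (c : nat -> 'I_6) (n : nat),
      nondegenerate_triple T0 ->
      (a%:E * J (chain T0 c n) <= J (chain T0 c n.+1))%E /\
      (J (chain T0 c n.+1) <= b%:E * J (chain T0 c n))%E.
Proof.
exists 4^-1, 4; split; first lra; split; first lra.
by move=> T0 c n _; exact: J_subtri_bounds.
Qed.
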